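(* In the standing setting below, let $\mathcal{O}$ be the set of popular sets. Then $\mathcal{F}:=\mathcal{C}(M)\cup\mathcal{O}$ satisfies the strong circuit elimination axiom: for every $F_0,F_1\in\mathcal{F}$, $e\in F_0\cap F_1$ and $f\in F_0\triangle F_1$ there is $G\in\mathcal{F}$ with $f\in G\subseteq(F_0\cup F_1)\setminus\{e\}$.
   Context: Standing setting: $M,N$ are finitary matroids on a common ground set $E$; $\mathcal{C}(M)$ is the set of circuits of $M$; $I\in\mathcal{I}(M)\cap\mathcal{I}(N)$ is maximal among common independent sets; $\kappa:=r(N/I)$ is an uncountable regular cardinal and $r(M/I)<\kappa$. Fix a base $J_M$ of $M/I$ and a base $J_N$ of $N/I$, put $B_M:=I\cup J_M$, $B_N:=I\cup J_N$, $b:=(B_M,B_N)$. For a base $B$ of a matroid $M$, $D_M(B)$ is the digraph on $E$ with arc $ef$ iff $e\notin B$ and $f\in C_M(e,B)\setminus\{e\}$ ($C_M(e,B)$ the fundamental circuit); $D(b):=D_M(B_M)\cup D_N^{-1}(B_N)$ where $D^{-1}$ reverses all arcs. A $b$-path is a finite directed path $P$ in $D(b)$ whose initial vertex lies in $B_N\setminus B_M$; $\mathsf{ter}(P)$ is its terminal vertex and $\mathsf{ter}(\mathcal{P})=\{\mathsf{ter}(P):P\in\mathcal{P}\}$. A $b$-path-system is a set of $\kappa$ pairwise disjoint $b$-paths. A $\Delta$-system is a family of sets any two of which intersect in the same set $K$ (the kernel); its petals are $C\setminus K$. A nonempty $K\subseteq E$ is popular if there exist a $b$-path-system $\mathcal{P}$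 and a $\Delta$-system $\mathcal{D}$ of $\kappa$ many circuits of $M$ with kernel $K$ such that every petal of $\mathcal{D}$ is contained in $I\cup\mathsf{ter}(\mathcal{P})$. *)

From HB Require Import structures.
From mathcomp Require Import all_boot all_order all_algebra.
From mathcomp Require Import boolp classical_sets cardinality.
Set Implicit Arguments. Unset Strict Implicit. Unset Printing Implicit Defensive.
Local Open Scope classical_set_scope.

Section MatroidDefs.
Variable E : choiceType.

Definition is_maximal (P : set (set E)) (X : set E) : Prop :=
  P X /\ forall Y, P Y -> X `<=` Y -> Y = X.

Definition is_base (Ind : set (set E)) (B : set E) : Prop := is_maximal Ind B.

(* Matroid axioms on ground set [set: E] (Bruhn et al. independence axioms) *)
Definition matroid (Ind : set (set E)) : Prop :=
  [/\ Ind set0,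
      (forall X Y, Ind Y -> X `<=` Y -> Ind X),
      (forall I B, Ind I -> ~ is_base Ind I -> is_base Ind B ->
          exists x, [/\ B x, ~ I x & Ind (x |` I)]) &
      (forall I X, Ind I -> I `<=` X ->
          exists Y, is_maximal (fun Z => [/\ Ind Z, I `<=` Z & Z `<=` X]) Y)].

Definition is_circuit (Ind : set (set E)) (C : set E) : Prop :=
  ~ Ind C /\ forall C', C' `<=` C -> C' <> C -> Ind C'.

Definition finitary (Ind : set (set E)) : Prop :=
  forall C, is_circuit Ind C -> finite_set C.

Definition finitary_matroid (Ind : set (set E)) : Prop :=
  matroid Ind /\ finitary Ind.

(* independent sets of the contraction M/I, for I independent in M *)
Definition contr (Ind : set (set E)) (I : set E) : set (set E) :=
  fun J => J `&` I = set0 /\ Ind (J `|` I).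

(* arc e -> f of D_M(B): e \notin B and f \in C_M(e,B) \ {e} *)
Definition Darc (Ind : set (set E)) (B : set E) (e f : E) : Prop :=
  ~ B e /\ exists C, [/\ is_circuit Ind C, C `<=` e |` B, C f & f <> e].

(* D(b) = D_M(B_M) \cup D_N^{-1}(B_N) *)
Definition Db (M N : set (set E)) (BM BN : set E) (e f : E) : Prop :=
  Darc M BM e f \/ Darc N BN f e.

Definition bpath (M N : set (set E)) (BM BN : set E) (p : seq E) : Prop :=
  match p with
  | [::] => False
  | x :: _ => [/\ BN x, ~ BM x, uniq p &
               forall i, i.+1 < size p -> Db M N BM BN (nth x p i) (nth x p i.+1)]
  end.

Definition ter_set (P : set (seq E)) : set E :=
  [set y | exists x q, P (x :: q) /\ y = last x q].

(* b-path-system: kappa pairwise disjoint b-paths, with kappa = |kap| *)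
Definition bpath_system (M N : set (set E)) (BM BN : set E) (kap : set E)
    (P : set (seq E)) : Prop :=
  [/\ (P #= kap)%card,
      (forall p, P p -> bpath M N BM BN p) &
      (forall p q, P p -> P q -> p <> q -> forall x, x \in p -> x \notin q)].

(* popular sets; kappa := |J_N| = r(N/I), B_M = I \cup J_M, B_N = I \cup J_N *)
Definition popular (M N : set (set E)) (I JM JN : set E) (K : set E) : Prop :=
  K <> set0 /\
  exists (P : set (seq E)) (D : set (set E)),
    [/\ bpath_system M N (I `|` JM) (I `|` JN) JN P,
        (D #= JN)%card,
        (forall C, D C -> is_circuit M C),
        (forall C1 C2, D C1 -> D C2 -> C1 <> C2 -> C1 `&` C2 = K) &
        (forall C, D C -> C `\` K `<=` I `|` ter_set P)].

(* the cardinal |A| is regular: A is not covered by fewer than |A| sets each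
   of cardinality < |A| *)
Definition card_lt (T U : Type) (A : set T) (B : set U) : Prop :=
  (A #<= B)%card /\ ~ (B #<= A)%card.

Definition regular_card (A : set E) : Prop :=
  forall S : set (set E), card_lt S A -> (forall X, S X -> card_lt X A) ->
    ~ (A `<=` \bigcup_(X in S) X).

End MatroidDefs.

From HB Require Import structures.
From mathcomp Require Import all_boot all_order all_algebra.
From mathcomp Require Import boolp classical_sets cardinality.
From mathcomp Require Import functions finmap.
Local Open Scope classical_set_scope.
Local Open Scope card_scope.
Set Implicit Arguments. Unset Strict Implicit. Unset Printing Implicit Defensive.

(* Circuits and popular sets [K] alike are kernels of Delta-systems [D] of
   circuits whose petals are reached by a b-path-system [P] and, by regularity
   of kappa, any fewer than kappa finite sets miss the petals of some member
   of [D], together with the paths reaching them.  For [F0], [F1] sharing [e],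
   Zorn's lemma thus yields kappa pairwise disjoint triples [(C0, C1, p)] with
   [Ci] from the Delta-system of [Fi] and [p] a spare path (so that kappa paths
   survive in the end); strong circuit elimination of [e] in [C0 `|` C1] gives
   circuits [G] through [f].  Their traces on the finite set [F0 `|` F1] take
   finitely many values, so kappa of them share a trace [T].  Either one of
   these circuits is [T] itself, or they form a Delta-system with kernel [T]
   whose petals are reached by the paths attached to the triples: [T] is
   popular. *)

Lemma setD1_notin (T : Type) (A : set T) x : ~ (A `\ x) x.
Proof. by case=> _ /(_ erefl). Qed.

Definition fcard (T : choiceType) (X : set T) := #|` fset_set X|%fset.

Lemma fcard_proper_lt (T : choiceType) (X Y : set T) :
  finite_set X -> Y `<=` X -> Y <> X -> (fcard Y < fcard X)%N.
Proof.
move=> fX YX nYX; have fY : finite_set Y := sub_finite_set YX fX.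
apply: fproper_ltn_card; rewrite fproperE; apply/andP; split.
  by have := YX; rewrite fset_set_sub.
apply/negP => h; have XY : X `<=` Y by rewrite fset_set_sub.
by apply: nYX; apply/seteqP; split.
Qed.

Lemma finite_minimal_sub (T : choiceType) (P : set T -> Prop) (X : set T) :
  finite_set X -> P X ->
  exists C, [/\ P C, C `<=` X & forall C', C' `<=` C -> C' <> C -> ~ P C'].
Proof.
have [n cX] : exists n, (fcard X <= n)%N by exists (fcard X).
elim: n X cX => [|n IH] X cX fX PX.
  exists X; split => // C' C'X nC'X; move: (fcard_proper_lt fX C'X nC'X).
  by rewrite ltnNge (leq_trans cX).
have [minX|] := pselect (forall C', C' `<=` X -> C' <> X -> ~ P C').
  by exists X; split.
move=> /existsNP [C' /not_implyP [C'X /not_implyP [nC'X /contrapT PC']]].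
have [C [PC CC' minC]] := IH C' (leq_trans (fcard_proper_lt fX C'X nC'X) cX)
  (sub_finite_set C'X fX) PC'.
by exists C; split => //; apply: subset_trans C'X.
Qed.

Section Matroid.
Variables (E : choiceType) (M : set (set E)).
Hypothesis hM : matroid M.

Lemma indep_sub X Y : M Y -> X `<=` Y -> M X.
Proof. by case: hM => _ h _ _; apply: h. Qed.

Lemma base_augment I B : M I -> ~ is_base M I -> is_base M B ->
  exists x, [/\ B x, ~ I x & M (x |` I)].
Proof. by case: hM => _ _ h _; apply: h. Qed.

Lemma indep_maximal_within Y X : M Y -> Y `<=` X ->
  exists B, is_maximal (fun Z => [/\ M Z, Y `<=` Z & Z `<=` X]) B.
Proof. by case: hM => _ _ _ h; apply: h. Qed.

Lemma indep_in_base Y : M Y -> exists2 B, is_base M B & Y `<=` B.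
Proof.
move=> MY; have [B [[MB YB _] maxB]] := indep_maximal_within MY (subsetT Y).
exists B => //; split => // Z MZ BZ.
by apply: maxB => //; split => //; apply: subset_trans BZ.
Qed.

Lemma base_setD1_not_base B g : is_base M B -> B g -> ~ is_base M (B `\ g).
Proof.
move=> [MB _] Bg [_ maxBg]; have /(congr1 (@^~ g)) := maxBg B MB (@subDsetl _ _ _).
by rewrite propeqE => -[/(_ Bg) + _]; apply: setD1_notin.
Qed.

Lemma maximal_within_base B X Y B' : is_base M B ->
  (forall x, B x -> ~ X x -> ~ M (x |` B')) ->
  is_maximal (fun Z => [/\ M Z, Y `<=` Z & Z `<=` X]) B' -> is_base M B'.
Proof.
move=> Bb outX [[MB' YB' B'X] maxB']; apply: contrapT => nB'b.
have [x [Bx nB'x MxB']] := base_augment MB' nB'b Bb.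
have [Xx|nXx] := pselect (X x); last exact: outX Bx nXx MxB'.
apply: nB'x; rewrite -(maxB' (x |` B')); first by left.
  by split => //; [apply: subset_trans (@subsetUr _ _ _)|move=> y [->|/B'X]].
exact: subsetUr.
Qed.

Lemma circuit_proper_indep C X : is_circuit M C -> X `<=` C -> X <> C -> M X.
Proof. by case=> _ h; apply: h. Qed.

Lemma circuit_setD1_indep C g : is_circuit M C -> C g -> M (C `\ g).
Proof.
move=> Cc Cg; apply: (circuit_proper_indep Cc (@subDsetl _ _ _)).
by move=> /(congr1 (@^~ g)); rewrite propeqE => -[_ /(_ Cg)]; apply: setD1_notin.
Qed.

Lemma circuit_sub_eq C1 C2 : is_circuit M C1 -> is_circuit M C2 ->
  C1 `<=` C2 -> C1 = C2.
Proof.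
move=> [nM1 _] C2c C12; apply: contrapT => ne; apply: nM1.
exact: circuit_proper_indep C2c C12 ne.
Qed.

Lemma circuit_weak_elim C1 C2 e : is_circuit M C1 -> is_circuit M C2 ->
  C1 <> C2 -> C1 e -> C2 e -> ~ M ((C1 `|` C2) `\ e).
Proof.
move=> C1c C2c C12 e1 e2 MY.
have [g [g2 g1]] : exists g, C2 g /\ ~ C1 g.
  apply: contrapT => /forallNP h; apply/C12/esym/circuit_sub_eq => // x x2.
  by have /not_andP[//|/contrapT] := h x.
have ge : g <> e by move=> ge; apply: g1; rewrite ge.
have [B Bb YB] := indep_in_base MY.
have Bg : B g by apply: YB; split; [right|].
pose X := (B `\ g) `|` [set e].
have C2gX : C2 `\ g `<=` X.
  move=> x [x2 xg]; have [->|xe] := pselect (x = e); first by right.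
  by left; split => //; apply: YB; split; [right|].
have [B' maxB'] := indep_maximal_within (circuit_setD1_indep C2c g2) C2gX.
have B'b : is_base M B'.
  apply: (maximal_within_base Bb _ maxB') => x Bx nXx MxB'.
  have xg : x = g by apply: contrapT => xg; apply: nXx; left.
  case: maxB' => -[_ C2B' _] _; apply: C2c.1; apply: (indep_sub MxB') => y y2.
  by have [->|yg] := pselect (y = g); [left|right; apply: C2B'].
have [x [B'x nx MxBg]] := base_augment (indep_sub Bb.1 (@subDsetl _ _ _))
  (base_setD1_not_base Bb Bg) B'b.
have xe : x = e by case: maxB' => -[_ _ /(_ x B'x) [|]].
apply: C1c.1; apply: (indep_sub MxBg) => y y1.
have [->|ye] := pselect (y = e); first by left.
right; split; first by apply: YB; split; [left|].
by move=> yg; apply: g1; rewrite -yg.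
Qed.

Lemma dependent_has_circuit X : finite_set X -> ~ M X ->
  exists2 C, is_circuit M C & C `<=` X.
Proof.
move=> fX nMX; have [C [nMC CX minC]] := finite_minimal_sub (P := fun Y => ~ M Y) fX nMX.
exists C => //; split => // C' C'C nC'C; exact: contrapT (minC C' C'C nC'C).
Qed.

Hypothesis hfin : finitary M.

(* Induction on the size of [C1 `|` C2]: a circuit [C3] given by weak
   elimination either contains [f], or is used to eliminate [e] between [C2]
   and [C3] first, and then between [C1] and the result. *)
Lemma circuit_strong_elim C1 C2 e f :
  is_circuit M C1 -> is_circuit M C2 -> C1 <> C2 -> C1 e -> C2 e -> C1 f -> ~ C2 f ->
  exists C, [/\ is_circuit M C, C f & C `<=` (C1 `|` C2) `\ e].
Proof.
have [n cn] : exists n, (fcard (C1 `|` C2) <= n)%N by exists (fcard (C1 `|` C2)).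
elim: n C1 C2 e f cn => [|n IH] C1 C2 e f cn C1c C2c ne e1 e2 f1 f2;
  have fU : finite_set (C1 `|` C2) by rewrite finite_setU; split; apply: hfin.
  have : (fset_set (C1 `|` C2) == fset0)%fset by rewrite -cardfs_eq0 -leqn0.
  move/eqP => h0; have : (e \in fset_set (C1 `|` C2))%fset.
    by rewrite in_fset_set //; apply/mem_set; left.
  by rewrite h0.
have [C3 C3c C3Y] := dependent_has_circuit (finite_setD _ fU)
  (circuit_weak_elim C1c C2c ne e1 e2).
have [C3f|nC3f] := pselect (C3 f); first by exists C3.
have [g [g3 g1]] : exists g, C3 g /\ ~ C1 g.
  apply: contrapT => /forallNP h.
  have C31 : C3 `<=` C1 by move=> x x3; have /not_andP[//|/contrapT] := h x.
  have e3 := C3Y e; rewrite (circuit_sub_eq C3c C1c C31) in e3.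
  exact: setD1_notin (e3 e1).
have g2 : C2 g by case: (C3Y g g3) => -[].
have e3 : ~ C3 e by move=> /C3Y; apply: setD1_notin.
have sub23 : C2 `|` C3 `<=` C1 `|` C2 by move=> x [x2|/C3Y [] //]; right.
have lt23 : (fcard (C2 `|` C3) < fcard (C1 `|` C2))%N.
  apply: fcard_proper_lt => // /(congr1 (@^~ f)); rewrite propeqE.
  by case=> _ /(_ (or_introl f1)) [].
have n23 : C2 <> C3 by move=> h; apply: e3; rewrite -h.
have [C4 [C4c C4e C4s]] := IH C2 C3 g e (leq_trans lt23 cn) C2c C3c n23
  g2 g3 e2 e3.
have f4 : ~ C4 f by move=> /C4s [] [].
have sub14 : C1 `|` C4 `<=` C1 `|` C2 by move=> x [x1|/C4s [] /sub23 //]; left.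
have lt14 : (fcard (C1 `|` C4) < fcard (C1 `|` C2))%N.
  apply: fcard_proper_lt => // /(congr1 (@^~ g)); rewrite propeqE.
  by case=> _ /(_ (or_intror g2)) [//|/C4s]; apply: setD1_notin.
have n14 : C1 <> C4 by move=> h; apply: f4; rewrite -h.
have [C5 [C5c C5f C5s]] := IH C1 C4 e f (leq_trans lt14 cn) C1c C4c n14
  e1 C4e f1 f4.
by exists C5; split => // x /C5s [/sub14 x12 xe].
Qed.

Lemma circuit_strong_elim_symdiff C1 C2 e f :
  is_circuit M C1 -> is_circuit M C2 -> C1 e -> C2 e ->
  (C1 f /\ ~ C2 f) \/ (C2 f /\ ~ C1 f) ->
  exists C, [/\ is_circuit M C, C f & C `<=` (C1 `|` C2) `\ e].
Proof.
move=> C1c C2c e1 e2 [[f1 nf2]|[f2 nf1]].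
  have ne : C1 <> C2 by move=> C12; apply: nf2; rewrite -C12.
  exact: (circuit_strong_elim C1c C2c ne e1 e2 f1 nf2).
have ne : C2 <> C1 by move=> C21; apply: nf1; rewrite -C21.
have [C [Cc Cf CC]] := circuit_strong_elim C2c C1c ne e2 e1 f2 nf1.
by exists C; split => //; rewrite setUC.
Qed.

End Matroid.

Lemma disjointP T (A B : set T) : A `&` B = set0 <-> (forall y, A y -> B y -> False).
Proof.
split => [AB0 y Ay By|h]; first by have : (A `&` B) y; [split|rewrite AB0].
by apply/seteqP; split => // y [Ay By]; case: (h y Ay By).
Qed.

Lemma finite_subsingleton T (S : set T) :
  (forall a b, S a -> S b -> a = b) -> finite_set S.
Proof.
move=> h; have [[a Sa]|/nonemptyPn ->] := pselect (S !=set0); last exact: finite_set0.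
suff -> : S = [set a] by apply: finite_set1.
by apply/seteqP; split => [x Sx|x ->] //; apply: h.
Qed.

Lemma finite_powerset (T : choiceType) (W : set T) : finite_set W ->
  finite_set [set X | X `<=` W].
Proof.
move=> fW; apply: (@sub_finite_set _ _
  ((fun F : {fset T} => [set` F]) @` [set` fpowerset (fset_set W)])).
  move=> X XW; have fX := sub_finite_set XW fW.
  exists (fset_set X); last exact: fset_setK.
  by rewrite /= fpowersetE -fset_set_sub.
exact/finite_image/finite_fset.
Qed.

Lemma card_le_inj_fun T U (u0 : U) (A : set T) (B : set U) : A #<= B ->
  exists f : T -> U, {in A &, injective f} /\ (forall x, A x -> B (f x)).
Proof.
elim/Ppointed: U => U in u0 B *; first by case: (no u0).
move/pcard_leP => [g]; exists g; split; first exact: inj.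
by move=> x Ax; apply: funS.
Qed.

Lemma card_le_of_inj T U (f : T -> U) (A : set T) (B : set U) :
  {in A &, injective f} -> (forall x, A x -> B (f x)) -> A #<= B.
Proof.
move=> fi fAB; have /card_eqPle[Af _] := card_esym (inj_card_eq fi).
by apply: card_le_trans Af _; apply: subset_card_le => _ [x Ax <-]; apply: fAB.
Qed.

Lemma card_le_lt_trans (T U V : Type) (X : set T) (Y : set U) (Z : set V) :
  X #<= Y -> card_lt Y Z -> card_lt X Z.
Proof.
move=> XY [YZ nZY]; split; first exact: card_le_trans XY YZ.
by move=> ZX; apply: nZY; apply: card_le_trans ZX XY.
Qed.

Section RegularCardinal.
Variables (E : choiceType) (kap : set E).
Hypothesis kap_inf : infinite_set kap.
Hypothesis kap_reg : regular_card kap.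

Lemma finite_card_lt T (X : set T) : finite_set X -> card_lt X kap.
Proof.
move=> fX; split; last by move=> kX; apply: kap_inf; apply: card_le_finite kX fX.
have [n /card_eqPle[Xn _]] := fX; apply: card_le_trans Xn _.
by apply: card_le_trans (subset_card_le (subsetT _)) _; apply/infiniteP.
Qed.

(* Transport the covering along an injection of [kap] into [Y]. *)
Lemma regular_no_small_cover T X (Y : set T) (A : set X) (g : X -> set T) :
  kap #<= Y -> card_lt A kap -> (forall x, A x -> card_lt (g x) kap) ->
  ~ (Y `<=` \bigcup_(x in A) g x).
Proof.
move=> kY sA sg cov.
have [y0 _] := infinite_setN0 (fun fY => kap_inf (card_le_finite kY fY)).
have [h [hi hY]] := card_le_inj_fun y0 kY.
apply: (kap_reg (S := [set kap `&` h @^-1` g x | x in A])).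
- exact: card_le_lt_trans (card_image_le _ _) sA.
- move=> _ [x Ax <-]; apply: card_le_lt_trans (sg x Ax).
  apply: (card_le_of_inj (f := h)) => [a b /set_mem[ka _] /set_mem[kb _]|a []//].
  by apply: hi; apply: mem_set.
- move=> a ka; have [x Ax gx] := cov _ (hY a ka).
  by exists (kap `&` h @^-1` g x); [exists x|].
Qed.

Lemma regular_no_finite_cover T X (Y : set T) (A : set X) (g : X -> set T)
    (Z : set T) :
  kap #<= Y -> card_lt A kap -> (forall x, A x -> finite_set (g x)) ->
  finite_set Z -> ~ (Y `<=` Z `|` \bigcup_(x in A) g x).
Proof.
move=> kY sA fg fZ cov; have [[a0 Aa0]|/nonemptyPn A0] := pselect (A !=set0).
  apply: (regular_no_small_cover (g := fun x => Z `|` g x) kY sA).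
    by move=> x Ax; apply: finite_card_lt; rewrite finite_setU; split => //; apply: fg.
  move=> y /cov [Zy|[x Ax gx]]; first by exists a0 => //; left.
  by exists x => //; right.
apply: kap_inf; apply: card_le_finite fZ; apply: card_le_trans kY _.
by apply: subset_card_le => y /cov [//|[x]]; rewrite A0.
Qed.

Lemma regular_pigeonhole T X (Y : set T) (A : set X) (cls : X -> set T) :
  kap #<= Y -> Y #<= kap -> finite_set A -> (forall x, A x -> cls x `<=` Y) ->
  Y `<=` \bigcup_(x in A) cls x -> exists2 x, A x & kap #<= cls x.
Proof.
move=> kY Yk fA clsY cov; apply: contrapT => /forall2NP small.
apply: (regular_no_small_cover kY (finite_card_lt fA) _ cov) => x Ax.
split; first exact: card_le_trans (subset_card_le (clsY x Ax)) Yk.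
by have [|] := small x.
Qed.

Definition avoids_small T (Y : set T) (foot : T -> set E) :=
  forall (X : Type) (A : set X) (g : X -> set E) (Z : set E),
    card_lt A kap -> (forall x, A x -> finite_set (g x)) -> finite_set Z ->
    exists2 y, Y y & foot y `&` (Z `|` \bigcup_(x in A) g x) = set0.

Lemma regular_avoids_small T (Y : set T) (foot : T -> set E) :
  kap #<= Y -> (forall z, finite_set [set y | Y y /\ foot y z]) ->
  avoids_small Y foot.
Proof.
move=> kY fin X A g Z sA fg fZ; apply: contrapT => /forall2NP nex.
pose touch W := [set y | Y y /\ exists2 z, W z & foot y z].
have ftouch W : finite_set W -> finite_set (touch W).
  move=> fW; apply: (@sub_finite_set _ _ (\bigcup_(z in W) [set y | Y y /\ foot y z])).
    by move=> y [Yy [z Wz fz]]; exists z.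
  by apply: bigcup_finite => // z _; apply: fin.
apply: (regular_no_finite_cover (g := touch \o g) kY sA _ (ftouch Z fZ)).
  by move=> x Ax; apply/ftouch/fg.
move=> y Yy; have [//|/eqP/set0P[z [fz [Zz|[x Ax gz]]]]] := nex y.
  by left; split => //; exists z.
by right; exists x => //; split => //; exists z.
Qed.

End RegularCardinal.

Definition path_end (T : Type) (q : seq T) (y : T) : Prop :=
  exists x r, q = x :: r /\ y = last x r.

Lemma path_end_mem (T : eqType) (q : seq T) y : path_end q y -> y \in q.
Proof. by move=> [x [r [-> ->]]]; apply: mem_last. Qed.

Lemma path_end_uniq (T : Type) (q : seq T) y y' :
  path_end q y -> path_end q y' -> y = y'.
Proof. by move=> [x [r [-> ->]]] [x' [r' [[<- <-] ->]]]. Qed.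

Lemma ter_setP (T : choiceType) (P : set (seq T)) y :
  ter_set P y <-> exists2 q, P q & path_end q y.
Proof.
split => [[x [q [Pq ->]]]|[q Pq [x [r [qe ->]]]]].
  by exists (x :: q) => //; exists x, q.
by exists x, r; rewrite -qe.
Qed.

Definition petal_paths (T : eqType) (K : set T) (P : set (seq T)) (C : set T) :=
  [set q | P q /\ exists y, path_end q y /\ (C `\` K) y].

Definition petal_hull (T : eqType) (K : set T) (P : set (seq T)) (C : set T) :=
  (C `\` K) `|` \bigcup_(q in petal_paths K P C) [set x | x \in q].

Section Witness.
Variables (E : choiceType) (M N : set (set E)) (I JM JN : set E).
Let BM := I `|` JM.
Let BN := I `|` JN.
Hypothesis hM : finitary_matroid M.
Hypothesis JN_inf : infinite_set JN.
Hypothesis JN_reg : regular_card JN.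

Lemma circuit_finite C : is_circuit M C -> finite_set C.
Proof. by case: hM => _; apply. Qed.

Section PathSystem.
Variable P : set (seq E).
Hypothesis hP : bpath_system M N BM BN JN P.

Lemma bpath_system_meet q q' x : P q -> P q' -> x \in q -> x \in q' -> q = q'.
Proof.
case: hP => _ _ hd Pq Pq' xq xq'; apply: contrapT => ne.
by have := hd _ _ Pq Pq' ne x xq; rewrite xq'.
Qed.

Lemma bpath_system_head q : P q -> exists x r, q = x :: r /\ JN x.
Proof.
case: hP => _ hb _ /hb; case: q => // x r [[Ix|JNx] nBMx _ _]; last by exists x, r.
by case: nBMx; left.
Qed.

Lemma JN_le_bpath_system : JN #<= P.
Proof. by case: hP => /card_esym/card_eqPle[]. Qed.

Lemma finite_petal_paths K C : finite_set (C `\` K) ->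
  finite_set (petal_paths K P C).
Proof.
move=> fC; apply: (@sub_finite_set _ _
  (\bigcup_(y in C `\` K) [set q | P q /\ path_end q y])).
  by move=> q [Pq [y [ty Cy]]]; exists y.
apply: bigcup_finite => // y _; apply: finite_subsingleton => q q' [Pq tq] [Pq' tq'].
exact: bpath_system_meet Pq Pq' (path_end_mem tq) (path_end_mem tq').
Qed.

Lemma finite_petal_hull K C : finite_set C -> finite_set (petal_hull K P C).
Proof.
move=> fC; have fCK := finite_setD K fC; rewrite /petal_hull finite_setU; split => //.
by apply: bigcup_finite; [apply: finite_petal_paths|move=> q _; apply: finite_seq].
Qed.

Lemma bpath_system_avoids_small : avoids_small JN P (fun q => [set x | x \in q]).
Proof.
apply: (regular_avoids_small JN_inf JN_reg JN_le_bpath_system) => z.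
apply: finite_subsingleton => q q' [Pq zq] [Pq' zq'].
exact: bpath_system_meet Pq Pq' zq zq'.
Qed.

End PathSystem.

(* Common generalisation of popular sets and of circuits, the latter with
   [D := [set C]] and any b-path-system [P]. *)
Definition delta_witness K D P := [/\ finite_set K,
  (forall C, D C -> is_circuit M C /\ K `<=` C),
  (forall C, D C -> C `\` K `<=` I `|` ter_set P),
  bpath_system M N BM BN JN P & avoids_small JN D (petal_hull K P)].

Lemma circuit_delta_witness C P : is_circuit M C -> bpath_system M N BM BN JN P ->
  delta_witness C [set C] P.
Proof.
move=> Cc hP; split => //; first exact: circuit_finite.
- by move=> _ ->; split.
- by move=> _ -> x [].
move=> X A g Z _ _ _; exists C => //; apply/disjointP => y.
by move=> [[]|[q [_ [z [_ []]]]]].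
Qed.

Section Popular.
Variables (K : set E) (P : set (seq E)) (D : set (set E)).
Hypothesis hP : bpath_system M N BM BN JN P.
Hypothesis hD : D #= JN.
Hypothesis hDc : forall C, D C -> is_circuit M C.
Hypothesis hDK : forall C1 C2, D C1 -> D C2 -> C1 <> C2 -> C1 `&` C2 = K.
Hypothesis hDp : forall C, D C -> C `\` K `<=` I `|` ter_set P.

Lemma JN_le_delta : JN #<= D.
Proof. by have /card_eqPle[] := card_esym hD. Qed.

Lemma delta_kernel_sub C : D C -> K `<=` C.
Proof.
move=> DC; have [C2 [DC2 ne]] : exists C2, D C2 /\ C2 <> C.
  apply: contrapT => hn; apply: JN_inf.
  have onlyC X : D X -> X = C by move=> DX; apply: contrapT => nX; apply: hn; exists X.
  apply: card_le_finite JN_le_delta (finite_subsingleton _) => C1 C2 D1 D2.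
  by rewrite (onlyC _ D1) (onlyC _ D2).
by rewrite -(hDK DC DC2 (nesym ne)) => x [].
Qed.

Lemma delta_petal_uniq C1 C2 y : D C1 -> D C2 -> (C1 `\` K) y -> (C2 `\` K) y ->
  C1 = C2.
Proof.
move=> D1 D2 [y1 yK] [y2 _]; apply: contrapT => ne.
by apply: yK; rewrite -(hDK D1 D2 ne).
Qed.

Lemma delta_hull_finite_touch z :
  finite_set [set C | D C /\ petal_hull K P C z].
Proof.
apply: (@sub_finite_set _ _ ([set C | D C /\ (C `\` K) z] `|`
  [set C | D C /\ exists2 q, P q & z \in q /\ exists y, path_end q y /\ (C `\` K) y])).
  by move=> C [DC [Cz|[q [Pq qC] zq]]]; [left|right; split => //; exists q].
rewrite finite_setU; split; apply: finite_subsingleton.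
  by move=> C1 C2 [D1 h1] [D2 h2]; apply: delta_petal_uniq h1 h2.
move=> C1 C2 [D1 [q1 P1 [z1 [y1 [t1 c1]]]]] [D2 [q2 P2 [z2 [y2 [t2 c2]]]]].
have eq := bpath_system_meet hP P1 P2 z1 z2; subst q2.
by rewrite (path_end_uniq t1 t2) in c1; apply: delta_petal_uniq c1 c2.
Qed.

Lemma popular_delta_witness : delta_witness K D P.
Proof.
have [C0 DC0] := infinite_setN0 (fun fD => JN_inf (card_le_finite JN_le_delta fD)).
split => //.
- exact: sub_finite_set (delta_kernel_sub DC0) (circuit_finite (hDc DC0)).
- by move=> C DC; split; [apply: hDc|apply: delta_kernel_sub].
- exact: (regular_avoids_small JN_inf JN_reg JN_le_delta delta_hull_finite_touch).
Qed.

End Popular.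

Section Triples.
Variables (K0 K1 : set E) (D0 D1 : set (set E)) (P0 P1 : set (seq E)).
Hypothesis w0 : delta_witness K0 D0 P0.
Hypothesis w1 : delta_witness K1 D1 P1.

Definition triple := (set E * set E * seq E)%type.

Definition triple_hull (t : triple) :=
  petal_hull K0 P0 t.1.1 `|` petal_hull K1 P1 t.1.2 `|` [set x | x \in t.2].

Definition admissible (t : triple) := [/\ D0 t.1.1, D1 t.1.2, P0 t.2 &
  [/\ petal_hull K0 P0 t.1.1 `&` petal_hull K1 P1 t.1.2 = set0,
      [set x | x \in t.2] `&` (petal_hull K0 P0 t.1.1 `|` petal_hull K1 P1 t.1.2) = set0
    & triple_hull t `&` (K0 `|` K1) = set0]].

Definition disjoint_family (S : set triple) :=
  (forall t, S t -> admissible t) /\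
  (forall t u, S t -> S u -> t <> u -> triple_hull t `&` triple_hull u = set0).

Lemma disjoint_family_hull_eq S t u y : disjoint_family S -> S t -> S u ->
  triple_hull t y -> triple_hull u y -> t = u.
Proof.
move=> [_ dj] St Su ty uy; apply: contrapT => ne.
by have /disjointP/(_ y ty uy) := dj _ _ St Su ne.
Qed.

Lemma admissible_finite_hull t : admissible t -> finite_set (triple_hull t).
Proof.
case: w0 w1 t => _ hc0 _ hP0 _ [_ hc1 _ hP1 _] [[C C'] p] [/= DC DC' _ _].
rewrite /triple_hull 2!finite_setU; split; [split|exact: finite_seq];
  apply: finite_petal_hull => //; apply: circuit_finite.
  by case: (hc0 _ DC).
by case: (hc1 _ DC').
Qed.

Lemma admissible_head x0 t : admissible t ->
  JN (head x0 t.2) /\ triple_hull t (head x0 t.2).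
Proof.
case: w0 t => _ _ _ hP0 _ [[C C'] p] [_ _ /= Pp _].
have [x [r [-> Jx]]] := bpath_system_head hP0 Pp.
by split => //; right; rewrite /= inE eqxx.
Qed.

Lemma disjoint_family_sub S S' : disjoint_family S -> S' `<=` S -> disjoint_family S'.
Proof.
by move=> [adm dj] S'S; split => [t /S'S/adm|t u /S'S St /S'S Su]; [|apply: dj].
Qed.

Lemma disjoint_family_card_le S : disjoint_family S -> S #<= JN.
Proof.
have [x0 _] := infinite_setN0 JN_inf.
move=> hS; apply: (card_le_of_inj (f := fun t => head x0 t.2)); last first.
  by move=> t /hS.1/(admissible_head x0)[].
move=> t u /set_mem St /set_mem Su htu; apply: (disjoint_family_hull_eq hS St Su).
  exact: (admissible_head x0 (hS.1 _ St)).2.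
by rewrite htu; exact: (admissible_head x0 (hS.1 _ Su)).2.
Qed.

Lemma disjoint_family_chain (F : set (set triple)) :
  F `<=` disjoint_family -> total_on F subset ->
  disjoint_family (\bigcup_(X in F) X).
Proof.
move=> Fd tot; split => [t [X FX Xt]|t u [X FX Xt] [Y FY Yu] ne].
  exact: (Fd X FX).1.
have [XY|YX] := tot X Y FX FY; first by apply: (Fd Y FY).2 => //; apply: XY.
by apply: (Fd X FX).2 => //; apply: YX.
Qed.

(* Avoid successively the hulls of [S] by a circuit of [D0], then by a
   circuit of [D1], and finally by a path of [P0]. *)
Lemma admissible_avoiding S : disjoint_family S -> card_lt S JN ->
  exists2 t, admissible t & triple_hull t `&` \bigcup_(u in S) triple_hull u = set0.
Proof.
move=> [adm _] sS; have fH u : S u -> finite_set (triple_hull u).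
  by move/adm; apply: admissible_finite_hull.
case: w0 w1 => fK0 hc0 _ hP0 av0 [fK1 hc1 _ hP1 av1].
have fK : finite_set (K0 `|` K1) by rewrite finite_setU.
have [C DC /disjointP hC] := av0 _ _ _ _ sS fH fK.
have fC : finite_set (petal_hull K0 P0 C).
  by apply: finite_petal_hull => //; apply: circuit_finite; case: (hc0 _ DC).
have fZ1 : finite_set (K0 `|` K1 `|` petal_hull K0 P0 C) by rewrite finite_setU.
have [C' DC' /disjointP hC'] := av1 _ _ _ _ sS fH fZ1.
have fC' : finite_set (petal_hull K1 P1 C').
  by apply: finite_petal_hull => //; apply: circuit_finite; case: (hc1 _ DC').
have fZ2 : finite_set (K0 `|` K1 `|` petal_hull K0 P0 C `|` petal_hull K1 P1 C').
  by rewrite finite_setU.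
have [p Pp /disjointP hp] := bpath_system_avoids_small hP0 sS fH fZ2.
exists (C, C', p).
  split => //; split; apply/disjointP => /=.
  - by move=> y y0 y1; apply: (hC' y y1); left; right.
  - by move=> y yp [y0|y1]; apply: (hp y yp); left; [left; right|right].
  - move=> y [[y0|y1]|yp] yK.
    + by apply: (hC y y0); left.
    + by apply: (hC' y y1); left; left.
    + by apply: (hp y yp); left; left; left.
apply/disjointP => y [[y0|y1]|yp] yS;
  [apply: (hC y y0)|apply: (hC' y y1)|apply: (hp y yp)]; by right.
Qed.

Lemma large_disjoint_family : exists S, disjoint_family S /\ JN #<= S.
Proof.
have [S [hS maxS]] := Zorn_bigcup disjoint_family_chain.
exists S; split => //; apply: contrapT => nJS.
have [t adm_t /disjointP tS] :=
  admissible_avoiding hS (conj (disjoint_family_card_le hS) nJS).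
have [x0 _] := infinite_setN0 JN_inf; have [_ tHx] := admissible_head x0 adm_t.
have nSt : ~ S t by move=> St; apply: (tS _ tHx); exists t.
apply: (maxS (S `|` [set t])).
  split; first exact: subsetUl.
  by move=> St; apply: nSt; apply: (St t); right.
split => [u [/hS.1|->]//|u v [Su|->] [Sv|->] ne].
- exact: hS.2.
- by apply/disjointP => y yu yv; apply: (tS y yv); exists u.
- by apply/disjointP => y yt yv; apply: (tS y yt); exists v.
- by case: ne.
Qed.

Definition triple_paths (t : triple) :=
  petal_paths K0 P0 t.1.1 `|` petal_paths K1 P1 t.1.2 `|` [set t.2].

Lemma triple_paths_origin t q : admissible t -> triple_paths t q ->
  (P0 q /\ [set x | x \in q] `<=` petal_hull K0 P0 t.1.1 `|` [set x | x \in t.2]) \/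
  (P1 q /\ [set x | x \in q] `<=` petal_hull K1 P1 t.1.2).
Proof.
move=> [_ _ Pp _] [[Q0|Q1]|->].
- by left; split; [case: Q0|move=> x xq; left; right; exists q].
- by right; split; [case: Q1|move=> x xq; right; exists q].
- by left; split => // x xp; right.
Qed.

Lemma triple_paths_hull t q : admissible t -> triple_paths t q ->
  [set x | x \in q] `<=` triple_hull t.
Proof.
move=> adm /(triple_paths_origin adm) [[_ qH] x /qH [x0|xp]|[_ qH] x /qH x1].
- by left; left.
- by right.
- by left; right.
Qed.

(* The paths of one admissible triple are disjoint: within [P0] or [P1]
   by assumption, and across them because the hulls are disjoint. *)
Lemma triple_paths_disjoint t q q' : admissible t ->
  triple_paths t q -> triple_paths t q' -> q <> q' -> forall x, x \in q -> x \notin q'.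
Proof.
case: w0 w1 => _ _ _ [_ _ dj0] _ [_ _ _ [_ _ dj1] _] adm Qq Qq' ne x xq.
case: (adm) => _ _ _ [/disjointP d01 /disjointP dp _].
apply/negP => xq'.
case: (triple_paths_origin adm Qq) => -[Pq hq];
  case: (triple_paths_origin adm Qq') => -[Pq' hq'].
- by move: (dj0 _ _ Pq Pq' ne x xq); rewrite xq'.
- by case: (hq x xq) => hx; [apply: d01 hx (hq' x xq')|apply: dp hx _; right; apply: hq'].
- by case: (hq' x xq') => hx; [apply: d01 hx (hq x xq)|apply: dp hx _; right; apply: hq].
- by move: (dj1 _ _ Pq Pq' ne x xq); rewrite xq'.
Qed.

Section MergedPaths.
Variable S : set triple.
Hypothesis hS : disjoint_family S.

Definition merged_paths := \bigcup_(t in S) triple_paths t.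

Lemma merged_paths_disjoint q q' : merged_paths q -> merged_paths q' -> q <> q' ->
  forall x, x \in q -> x \notin q'.
Proof.
move=> [t St Qq] [u Su Qq'] ne x xq; have [tu|tu] := pselect (t = u).
  by subst u; exact: triple_paths_disjoint (hS.1 _ St) Qq Qq' ne x xq.
apply/negP => xq'; apply/tu/(disjoint_family_hull_eq hS St Su).
  exact: triple_paths_hull (hS.1 _ St) Qq _ xq.
exact: triple_paths_hull (hS.1 _ Su) Qq' _ xq'.
Qed.

Lemma merged_paths_sub q : merged_paths q -> P0 q \/ P1 q.
Proof. by move=> [t /hS.1 adm /(triple_paths_origin adm)] [[]|[]]; [left|right]. Qed.

Lemma merged_paths_head q : merged_paths q -> exists x r, q = x :: r /\ JN x.
Proof.
case: w0 w1 => _ _ _ hP0 _ [_ _ _ hP1 _].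
case/merged_paths_sub => Pq; first exact: (bpath_system_head hP0 Pq).
exact: (bpath_system_head hP1 Pq).
Qed.

Hypothesis JS : JN #<= S.

Lemma merged_bpath_system : bpath_system M N BM BN JN merged_paths.
Proof.
case: w0 w1 => _ _ _ hP0 _ [_ _ _ hP1 _].
have [x0 _] := infinite_setN0 JN_inf.
split; last exact: merged_paths_disjoint.
- apply: Cantor_Bernstein.
    apply: (card_le_of_inj (f := head x0)); last first.
      by move=> q /merged_paths_head [x [r [-> Jx]]].
    move=> q q' /set_mem Pq /set_mem Pq' hq; apply: contrapT => ne.
    have [x [r [qe _]]] := merged_paths_head Pq.
    have [x' [r' [qe' _]]] := merged_paths_head Pq'.
    move: hq; rewrite qe qe' /= => xx; subst x'.
    have xq : x \in q by rewrite qe inE eqxx.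
    by have := merged_paths_disjoint Pq Pq' ne xq; rewrite qe' inE eqxx.
  apply: card_le_trans JS _; apply: (card_le_of_inj (f := fun t : triple => t.2)).
    move=> t u /set_mem St /set_mem Su tu; apply: (disjoint_family_hull_eq hS St Su).
      exact: (admissible_head x0 (hS.1 _ St)).2.
    by rewrite tu; exact: (admissible_head x0 (hS.1 _ Su)).2.
  by move=> t St; exists t => //; right.
- move=> q /merged_paths_sub [Pq|Pq].
    by case: hP0 => _ + _; apply.
  by case: hP1 => _ + _; apply.
Qed.

Lemma merged_paths_ter t : S t ->
  (t.1.1 `\` K0) `|` (t.1.2 `\` K1) `<=` I `|` ter_set merged_paths.
Proof.
case: w0 w1 => _ _ hp0 _ _ [_ _ hp1 _ _] St; have [DC DC' _ _] := hS.1 _ St.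
move=> y [yC|yC'].
  case: (hp0 _ DC y yC) => [Iy|/ter_setP [q Pq tq]]; [by left|right].
  by apply/ter_setP; exists q => //; exists t => //; left; left; split => //; exists y.
case: (hp1 _ DC' y yC') => [Iy|/ter_setP [q Pq tq]]; [by left|right].
by apply/ter_setP; exists q => //; exists t => //; left; right; split => //; exists y.
Qed.

Section Trace.
Variables (G : triple -> set E) (T : set E).
Hypothesis G_circuit : forall t, S t -> is_circuit M (G t).
Hypothesis G_sub : forall t, S t -> G t `<=` t.1.1 `|` t.1.2.
Hypothesis G_trace : forall t, S t -> G t `&` (K0 `|` K1) = T.
Hypothesis G_neq : forall t, S t -> G t <> T.

Lemma outside_kernels_in_hull t y : S t -> G t y -> ~ (K0 `|` K1) y ->
  triple_hull t y /\ ((t.1.1 `\` K0) `|` (t.1.2 `\` K1)) y.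
Proof.
move=> St Gy nK; have nK0 : ~ K0 y by move=> ?; apply: nK; left.
have nK1 : ~ K1 y by move=> ?; apply: nK; right.
by case: (G_sub St Gy) => [y0|y1]; split; do ?[by left; left; left|by left; right; left];
  [left|right].
Qed.

Lemma exists_outside_kernels t : S t -> exists2 y, G t y & ~ (K0 `|` K1) y.
Proof.
move=> St; apply: contrapT => /forall2NP nex; apply: (G_neq St).
rewrite -(G_trace St); apply/seteqP; split => [y Gy|y []//]; split => //.
by case: (nex y) => // /contrapT.
Qed.

Lemma trace_circuits_inj : {in S &, injective G}.
Proof.
move=> t u /set_mem St /set_mem Su tu; have [y Gy nK] := exists_outside_kernels St.
apply: (disjoint_family_hull_eq hS St Su (outside_kernels_in_hull St Gy nK).1).
by rewrite tu in Gy; apply: (outside_kernels_in_hull Su Gy nK).1.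
Qed.

Lemma trace_circuits_meet t u : S t -> S u -> G t <> G u -> G t `&` G u = T.
Proof.
move=> St Su ne; apply/seteqP; split; last first.
  by move=> y Ty; split; [rewrite -(G_trace St) in Ty|rewrite -(G_trace Su) in Ty];
    case: Ty.
move=> y [yt yu]; have [yK|nK] := pselect ((K0 `|` K1) y).
  by rewrite -(G_trace St).
case: ne; congr G.
apply: (disjoint_family_hull_eq hS St Su (outside_kernels_in_hull St yt nK).1).
exact: (outside_kernels_in_hull Su yu nK).1.
Qed.

Lemma popular_trace : T <> set0 -> popular M N I JM JN T.
Proof.
move=> T0; split => //; exists merged_paths, (G @` S); split.
- exact: merged_bpath_system.
- apply: Cantor_Bernstein.
    exact: card_le_trans (card_image_le G S) (disjoint_family_card_le hS).
  apply: card_le_trans JS _; apply: (card_le_of_inj trace_circuits_inj).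
  by move=> t St; exists t.
- by move=> _ [t St <-]; apply: G_circuit.
- by move=> _ _ [t St <-] [u Su <-]; apply: trace_circuits_meet.
- move=> _ [t St <-] y [Gy nT]; apply: (merged_paths_ter St).
  have nK : ~ (K0 `|` K1) y by move=> yK; apply: nT; rewrite -(G_trace St).
  exact: (outside_kernels_in_hull St Gy nK).2.
Qed.

End Trace.
End MergedPaths.

Section Elimination.
Variables (e f : E).
Hypothesis e0 : K0 e.
Hypothesis e1 : K1 e.
Hypothesis hf : (K0 f /\ ~ K1 f) \/ (K1 f /\ ~ K0 f).

Lemma admissible_strong_elim t : admissible t ->
  exists G, [/\ is_circuit M G, G f & G `<=` (t.1.1 `|` t.1.2) `\ e].
Proof.
case: t => [[C C'] p] /= [DC DC' _ [_ _ /disjointP hK]].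
case: w0 w1 hM => _ hc0 _ _ _ [_ hc1 _ _ _] [hm hfin].
have [Cc KC] := hc0 _ DC; have [C'c KC'] := hc1 _ DC'.
apply: (circuit_strong_elim_symdiff hm hfin Cc C'c (KC _ e0) (KC' _ e1)).
case: hf => [[f0 nf1]|[f1 nf0]]; [left|right]; split; [exact: KC| |exact: KC'|].
  by move=> C'f; apply: (hK f); [left; right; left; split|left].
by move=> Cf; apply: (hK f); [left; left; left; split|right].
Qed.

Lemma delta_witness_strong_elim : exists G,
  [/\ is_circuit M G \/ popular M N I JM JN G, G f & G `<=` (K0 `|` K1) `\ e].
Proof.
have [S [hS JS]] := large_disjoint_family.
have /choice [G hG] : forall t, exists G : set E, S t ->
    [/\ is_circuit M G, G f & G `<=` (t.1.1 `|` t.1.2) `\ e].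
  move=> t; have [St|nSt] := pselect (S t); last by exists set0.
  by have [G hG] := admissible_strong_elim (hS.1 _ St); exists G.
pose trace t := G t `&` (K0 `|` K1).
have fK : finite_set (K0 `|` K1).
  by case: w0 w1 => fK0 _ _ _ _ [fK1 _ _ _ _]; rewrite finite_setU.
have ftraces : finite_set (trace @` S).
  by apply: sub_finite_set (finite_powerset fK) => _ [t _ <-]; apply: subIsetr.
pose S_ T := [set t | S t /\ trace t = T].
have S_sub T : S_ T `<=` S by move=> t [].
have cover : S `<=` \bigcup_(T in trace @` S) S_ T.
  by move=> t St; exists (trace t); [exists t|].
have [T [t0 St0 trT] JS0] := regular_pigeonhole JN_inf JN_reg JS
  (disjoint_family_card_le hS) ftraces (fun T _ => S_sub T) cover.
have [G0c G0f G0e] := hG _ St0.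
have Tf : T f by rewrite -trT; split => //; case: hf => -[]; [left|right].
exists T; split => //; last by rewrite -trT => y [/G0e [_ ye] yK].
have [[t [St _] <-]|nex] := pselect (exists2 t, S t /\ trace t = T & G t = T).
  by left; case: (hG _ St).
right; apply: (popular_trace (disjoint_family_sub hS (S_sub T)) JS0 (G := G)).
- by move=> t [St _]; case: (hG _ St).
- by move=> t [St _]; case: (hG _ St) => _ _ /subset_trans; apply; apply: subDsetl.
- by move=> t [_].
- by move=> t S0t GT; apply: nex; exists t.
- by move=> T0; move: Tf; rewrite T0.
Qed.

End Elimination.
End Triples.

End Witness.

Theorem lemma4p3 (E : choiceType) (M N : set (set E)) (I JM JN : set E) :
  finitary_matroid M -> finitary_matroid N ->
  M I -> N I ->
  (forall X, M X -> N X -> I `<=` X -> X = I) ->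
  is_base (contr M I) JM -> is_base (contr N I) JN ->
  ~ countable JN -> regular_card JN -> card_lt JM JN ->
  let F := fun X => is_circuit M X \/ popular M N I JM JN X in
  forall F0 F1 e f, F F0 -> F F1 -> F0 e -> F1 e ->
    ((F0 f /\ ~ F1 f) \/ (F1 f /\ ~ F0 f)) ->
    exists G, [/\ F G, G f & G `<=` (F0 `|` F1) `\ e].
Proof.
move=> hM _ _ _ _ _ _ JN_unc JN_reg _ F F0 F1 e f F0F F1F e0 e1 hf.
have JN_inf : infinite_set JN by move/finite_set_countable.
have popular_witness K : popular M N I JM JN K ->
    exists D P, delta_witness M N I JM JN K D P.
  move=> [_ [P [D [hP hD hc hDK hp]]]]; exists D, P.
  exact: popular_delta_witness hP hD hc hDK hp.
have eliminate D0 D1 P0 P1 : delta_witness M N I JM JN F0 D0 P0 ->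
    delta_witness M N I JM JN F1 D1 P1 ->
    exists G, [/\ F G, G f & G `<=` (F0 `|` F1) `\ e].
  move=> w0 w1.
  by have [G hG] := delta_witness_strong_elim hM JN_inf JN_reg w0 w1 e0 e1 hf; exists G.
case: F0F => [C0|/popular_witness [D0 [P0 w0]]];
  case: F1F => [C1|/popular_witness [D1 [P1 w1]]].
- case: hM => hm hfin.
  have [G [Gc Gf GF]] := circuit_strong_elim_symdiff hm hfin C0 C1 e0 e1 hf.
  by exists G; split => //; left.
- by case: (w1) => _ _ _ hP1 _; apply: eliminate (circuit_delta_witness hM C0 hP1) w1.
- by case: (w0) => _ _ _ hP0 _; apply: eliminate w0 (circuit_delta_witness hM C1 hP0).
- exact: eliminate w0 w1.
Qed.
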